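(* Let $\mathcal{N}$ be a 2-step nilpotent Lie algebra over $\mathbb{R}$ whose commutator ideal $\mathcal{Z}=[\mathcal{N},\mathcal{N}]$ coincides with its center, and let $\mathcal{N}=\mathcal{V}\oplus\mathcal{Z}$ for a subspace $\mathcal{V}$. Suppose that every Lie ring automorphism $f$ of $\mathcal{N}$ with $f(\mathcal{V})=\mathcal{V}$ is a Lie algebra automorphism. Then for every Lie ring automorphism $f$ of $\mathcal{N}$ there exist a central automorphism $\mu$ and a Lie algebra automorphism $\overline{f}$ of $\mathcal{N}$ such that $f=\mu\circ\overline{f}$.
   Context: A Lie ring automorphism of a real Lie algebra is a bijective additive map preserving the bracket (not necessarily $\mathbb{R}$-linear); a Lie algebra automorphism is an $\mathbb{R}$-linear one. A central automorphism is a Lie ring automorphism $\mu$ with $\mu(x)-x$ in the center of $\mathcal{N}$ for all $x\in\mathcal{N}$. *)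

From HB Require Import structures.
From mathcomp Require Import all_boot all_order all_algebra.
From mathcomp Require Import reals.
Set Implicit Arguments. Unset Strict Implicit. Unset Printing Implicit Defensive.
Import Order.TTheory GRing.Theory Num.Theory.
Local Open Scope ring_scope.

Section Lie.
Variables (R : realType) (N : lmodType R) (br : N -> N -> N).

Definition is_lie_bracket : Prop :=
  [/\ forall a x y z, br (a *: x + y) z = a *: br x z + br y z,
      forall a x y z, br x (a *: y + z) = a *: br x y + br x z,
      forall x, br x x = 0
    & forall x y z, br x (br y z) + br y (br z x) + br z (br x y) = 0].

Definition two_step_nilpotent : Prop :=
  (forall x y z, br (br x y) z = 0) /\ exists x y, br x y != 0.

(* the commutator ideal [N,N]: (additive, hence linear) span of brackets *)
Definition in_commutator (z : N) : Prop :=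
  exists s : seq (N * N), z = \sum_(p <- s) br p.1 p.2.

Definition in_center (z : N) : Prop := forall y, br z y = 0.

Definition is_subspace (V : N -> Prop) : Prop :=
  [/\ V 0, forall x y, V x -> V y -> V (x + y) & forall a x, V x -> V (a *: x)].

Definition direct_sum (V Z : N -> Prop) : Prop :=
  (forall x, exists v z, [/\ V v, Z z & x = v + z]) /\
  (forall x, V x -> Z x -> x = 0).

Definition lie_ring_aut (f : N -> N) : Prop :=
  [/\ bijective f, forall x y, f (x + y) = f x + f y
    & forall x y, f (br x y) = br (f x) (f y)].

Definition lie_alg_aut (f : N -> N) : Prop :=
  lie_ring_aut f /\ forall (a : R) x, f (a *: x) = a *: f x.

Definition central_aut (f : N -> N) : Prop :=
  lie_ring_aut f /\ forall x, in_center (f x - x).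

Definition maps_onto_itself (f : N -> N) (V : N -> Prop) : Prop :=
  forall y, V y <-> exists x, V x /\ f x = y.

End Lie.

(* Let π be the projection onto V along the center Z = [N,N] and put
   τ := (1 - π) ∘ f ∘ π ∘ f⁻¹.  Then τ is additive, takes values in Z and
   vanishes on Z (f preserves the center), so τ ∘ τ = 0 and, since all brackets
   lie in Z, μ := 1 + τ is a central automorphism with inverse 1 - τ.  The
   automorphism f̄ := μ⁻¹ ∘ f agrees with π ∘ f on V, hence maps V onto V, and is
   therefore R-linear by hypothesis. *)
From Stdlib Require Import ClassicalEpsilon.
From HB Require Import structures.
From mathcomp Require Import all_boot all_order all_algebra.
From mathcomp Require Import reals.
Set Implicit Arguments. Unset Strict Implicit. Unset Printing Implicit Defensive.
Import GRing.Theory.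
Local Open Scope ring_scope.

Section AdditiveMaps.
Variables (U W : zmodType) (h : U -> W).
Hypothesis hD : {morph h : x y / x + y}.

Lemma morphD0 : h 0 = 0.
Proof. by apply: (addrI (h 0)); rewrite -hD !addr0. Qed.

Lemma morphDB : {morph h : x y / x - y}.
Proof. by move=> x y; apply: (addIr (h y)); rewrite -hD !subrK. Qed.

Lemma can_morphD (g : W -> U) : cancel h g -> cancel g h ->
  {morph g : x y / x + y}.
Proof. by move=> hK gK x y; rewrite -{1}[x]gK -{1}[y]gK -hD hK. Qed.

End AdditiveMaps.

Section LieRing.
Variables (R : realType) (N : lmodType R) (br : N -> N -> N).
Local Notation center := (in_center br).

Definition add_subgroup (P : N -> Prop) : Prop :=
  P 0 /\ forall x y, P x -> P y -> P (x - y).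

Lemma add_subgroupN P x : add_subgroup P -> P x -> P (- x).
Proof. by case=> P0 PB Px; rewrite -sub0r; apply: PB. Qed.

Lemma add_subgroupD P x y : add_subgroup P -> P x -> P y -> P (x + y).
Proof.
move=> P_grp Px Py; rewrite -[y]opprK.
by apply: P_grp.2 => //; apply: add_subgroupN.
Qed.

Lemma subspace_add_subgroup V : is_subspace V -> add_subgroup V.
Proof.
case=> V0 VD VZ; split=> // x y Vx Vy.
by apply: VD => //; rewrite -scaleN1r; apply: VZ.
Qed.

Section Projection.
Variables (V W : N -> Prop).
Hypotheses (V_grp : add_subgroup V) (W_grp : add_subgroup W).
Hypothesis VW : direct_sum V W.

Definition projV (x : N) : N :=
  epsilon (inhabits 0) (fun v => V v /\ W (x - v)).
Definition projW (x : N) : N := x - projV x.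

Lemma projV_spec x : V (projV x) /\ W (projW x).
Proof.
apply: (epsilon_spec (inhabits 0) (fun v => V v /\ W (x - v))).
have [v [w [Vv Ww ->]]] := VW.1 x.
by exists v; rewrite addrC addKr.
Qed.

Lemma projV_in x : V (projV x). Proof. exact: (projV_spec x).1. Qed.
Lemma projW_in x : W (projW x). Proof. exact: (projV_spec x).2. Qed.

Lemma projV_unique x v : V v -> W (x - v) -> projV x = v.
Proof.
move=> Vv Wxv; apply/eqP; rewrite -subr_eq0; apply/eqP; apply: VW.2.
  by apply: V_grp.2 => //; apply: projV_in.
have -> : projV x - v = (x - v) - projW x.
  by rewrite /projW opprB [RHS]addrC addrA subrK.
by apply: W_grp.2 => //; apply: projW_in.
Qed.

Lemma projVD : {morph projV : x y / x + y}.
Proof.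
move=> x y; apply: projV_unique.
  exact: add_subgroupD V_grp (projV_in x) (projV_in y).
by rewrite opprD addrACA; apply: add_subgroupD W_grp (projW_in x) (projW_in y).
Qed.

Lemma projWD : {morph projW : x y / x + y}.
Proof. by move=> x y; rewrite /projW projVD opprD addrACA. Qed.

Lemma projV_id v : V v -> projV v = v.
Proof. by move=> Vv; apply: projV_unique; rewrite // subrr; apply: W_grp.1. Qed.

Lemma projV_W w : W w -> projV w = 0.
Proof. by move=> Ww; apply: projV_unique; rewrite ?subr0 //; apply: V_grp.1. Qed.

End Projection.

Lemma lie_ring_aut_comp f g :
  lie_ring_aut br f -> lie_ring_aut br g -> lie_ring_aut br (f \o g).
Proof.
case=> f_bij fD fbr [g_bij gD gbr]; split; first exact: bij_comp.
  by move=> x y /=; rewrite gD fD.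
by move=> x y /=; rewrite gbr fbr.
Qed.

Lemma lie_ring_aut_inv f g :
  lie_ring_aut br f -> cancel f g -> cancel g f -> lie_ring_aut br g.
Proof.
case=> _ fD fbr fK gK; split; first by exists f.
  exact: can_morphD fK gK.
by move=> x y; rewrite -{1}[x]gK -{1}[y]gK -fbr fK.
Qed.

Lemma lie_ring_aut_center f z : lie_ring_aut br f -> center (f z) <-> center z.
Proof.
case=> -[g fK gK] fD fbr; have f0 := morphD0 fD.
split=> Hz y; last by rewrite -[y]gK -fbr Hz f0.
by apply: (can_inj fK); rewrite fbr Hz f0.
Qed.

Hypothesis br_lie : is_lie_bracket br.

Lemma brDl y : {morph br^~ y : x x' / x + x'}.
Proof.
by move=> x x'; case: br_lie => brl _ _ _; rewrite -[x]scale1r brl !scale1r.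
Qed.

Lemma brDr x : {morph br x : y y' / y + y'}.
Proof.
by move=> y y'; case: br_lie => _ brr _ _; rewrite -[y]scale1r brr !scale1r.
Qed.

Lemma brC x y : br x y = - br y x.
Proof.
case: br_lie => _ _ br_xx _; apply/eqP; rewrite -addr_eq0.
by have := br_xx (x + y); rewrite brDl !brDr !br_xx add0r addr0 addrC => ->.
Qed.

Lemma center_subgroup : add_subgroup center.
Proof.
split=> [y | x x' Hx Hx' y]; first exact: morphD0 (brDl y).
by rewrite (morphDB (brDl y)) Hx Hx' subrr.
Qed.

Lemma br_center_r x z : center z -> br x z = 0.
Proof. by move=> Hz; rewrite brC Hz oppr0. Qed.

Hypothesis br_center : forall x y, center (br x y).

Section CentralShift.
Variable tau : N -> N.
Hypothesis tauD : {morph tau : x y / x + y}.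
Hypothesis tau_center : forall y, center (tau y).
Hypothesis tau_center0 : forall z, center z -> tau z = 0.

Lemma central_shiftK : cancel (fun y => y + tau y) (fun y => y - tau y).
Proof. by move=> y; rewrite tauD (tau_center0 (tau_center y)) addr0 addrK. Qed.

Lemma central_shiftNK : cancel (fun y => y - tau y) (fun y => y + tau y).
Proof.
move=> y; rewrite (morphDB tauD) (tau_center0 (tau_center y)) subr0.
by rewrite subrK.
Qed.

Lemma central_shift_aut : central_aut br (fun y => y + tau y).
Proof.
split=> [|y]; last by rewrite addrC addKr.
split=> [|x y|x y] /=.
- by exists (fun y => y - tau y); [exact: central_shiftK | exact: central_shiftNK].
- by rewrite tauD addrACA.
rewrite (tau_center0 (br_center x y)) addr0 brDl !brDr.
by rewrite (br_center_r _ (tau_center y)) !(tau_center x) !addr0.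
Qed.

End CentralShift.

Section Correction.
Variables (V : N -> Prop) (f finv : N -> N).
Hypotheses (V_grp : add_subgroup V) (VZ : direct_sum V center).
Hypothesis f_aut : lie_ring_aut br f.
Hypotheses (fK : cancel f finv) (finvK : cancel finv f).

Local Notation pV := (projV V center).
Local Notation pZ := (projW V center).

Definition correction (y : N) : N := pZ (f (pV (finv y))).

Let fD : {morph f : x y / x + y}. Proof. by case: f_aut. Qed.
Let pVD : {morph pV : x y / x + y} := projVD V_grp center_subgroup VZ.
Let pZD : {morph pZ : x y / x + y} := projWD V_grp center_subgroup VZ.
Let pV_Z z : center z -> pV z = 0 := projV_W V_grp center_subgroup VZ (w := z).
Let pV_V v : V v -> pV v = v := projV_id V_grp center_subgroup VZ (v := v).

Lemma correctionD : {morph correction : x y / x + y}.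
Proof.
by move=> x y; rewrite /correction (can_morphD fD fK finvK) pVD fD pZD.
Qed.

Lemma correction_center y : center (correction y).
Proof. exact: projW_in VZ _. Qed.

Lemma correction_center0 z : center z -> correction z = 0.
Proof.
rewrite -{1}[z]finvK (lie_ring_aut_center _ f_aut) => Hz.
by rewrite /correction pV_Z // (morphD0 fD) (morphD0 pZD).
Qed.

Lemma correction_V v : V v -> f v - correction (f v) = pV (f v).
Proof. by move=> Vv; rewrite /correction fK pV_V ?subKr. Qed.

Lemma projV_f_projV w : pV (f (pV w)) = pV (f w).
Proof.
have -> : pV w = w - pZ w by rewrite /projW subKr.
rewrite (morphDB fD) (morphDB pVD) [pV (f (pZ w))]pV_Z ?subr0 //.
exact/(lie_ring_aut_center _ f_aut)/(projW_in VZ).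
Qed.

Lemma correction_maps_onto :
  maps_onto_itself (fun x => f x - correction (f x)) V.
Proof.
move=> y; split=> [Vy | [x [Vx <-]]]; last first.
  by rewrite correction_V //; apply: projV_in VZ _.
exists (pV (finv y)); split; first exact: projV_in VZ _.
by rewrite correction_V ?projV_f_projV ?finvK; [exact: pV_V | exact: projV_in VZ _].
Qed.

End Correction.

End LieRing.

Theorem proposition3p2 (R : realType) (N : lmodType R) (br : N -> N -> N)
  (V : N -> Prop) :
  is_lie_bracket br ->
  two_step_nilpotent br ->
  (forall z, in_commutator br z <-> in_center br z) ->
  is_subspace V ->
  direct_sum V (in_center br) ->
  (forall f, lie_ring_aut br f -> maps_onto_itself f V -> lie_alg_aut br f) ->
  forall f, lie_ring_aut br f ->
  exists mu fbar : N -> N,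
    [/\ central_aut br mu, lie_alg_aut br fbar & forall x, f x = mu (fbar x)].
Proof.
(* Only [N,N] ⊆ Z(N) is needed; it already implies [[N,N],N] = 0. *)
move=> br_lie _ commutator_center V_sub VZ V_linear f f_aut.
have br_center x y : in_center br (br x y).
  by apply/commutator_center; exists [:: (x, y)]; rewrite big_seq1.
have V_grp := subspace_add_subgroup V_sub.
have [[finv fK finvK] _ _] := f_aut.
pose tau := correction br V f finv.
have tauD := correctionD br_lie V_grp VZ f_aut fK finvK.
have tau_center := correction_center f finv VZ.
have tau_center0 := correction_center0 br_lie V_grp VZ f_aut finvK.
have mu_aut :=
  central_shift_aut br_lie br_center tauD tau_center tau_center0.
have muK := central_shiftK tauD tau_center tau_center0.
have muNK := central_shiftNK tauD tau_center tau_center0.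
exists (fun y => y + tau y), (fun x => f x - tau (f x)); split.
- exact: mu_aut.
- apply: V_linear; last exact: correction_maps_onto.
  exact: lie_ring_aut_comp (lie_ring_aut_inv mu_aut.1 muK muNK) f_aut.
- by move=> x; rewrite muNK.
Qed.
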